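(* The regularly locally finitely presentable modules are dense, with respect to the interleaving distance, in the space of (isomorphism classes of) q-tame upper semicontinuous $n$-parameter persistence modules.
   Context: Fix a field $\mathbb{k}$. An $n$-parameter persistence module is a functor $V:\mathbf{R}^n\to\mathbf{Vect}_{\mathbb{k}}$ ($\mathbf{R}^n$ with componentwise order), structure maps $V_{s,t}$. Write $s\ll t$ if $s_i<t_i$ for all $i$; $s+\varepsilon$ adds $\varepsilon$ to each coordinate. $V$ is q-tame if $V_{s,t}$ has finite rank whenever $s\ll t$; upper semicontinuous if $V_s\to\lim_{\varepsilon>0}V_{s+\varepsilon}$ is an isomorphism for all $s$; pointwise finite-dimensional if every $V_s$ is finite-dimensional. Shifts $V[\varepsilon]_s=V_{s+\varepsilon}$, $\eta_\varepsilon:V\to V[\varepsilon]$ the structure maps; an $\varepsilon$-interleaving is $f:V\to W[\varepsilon]$, $g:W\to V[\varepsilon]$ with $g[\varepsilon]f=\eta_{2\varepsilon}$, $f[\varepsilon]g=\eta_{2\varepsilon}$, and $d_I$ is the infimal such $\varepsilon$. For $\varepsilon>0$ and the regular grid $\mathbf{Q}=(\varepsilon\mathbb{Z})^n$, the restriction-extension $V_{\mathbf{Q}}$ is the module with $(V_{\mathbf{Q}})_s=V_{\sup\{p\in\mathbf{Q}:p\le s\}}$ (componentwise rounding down to $\varepsilon\mathbb{Z}$), with structure maps induced from $V$. A q-tame upper semicontinuous module $V$ is regularly locally finitely presentable if it is pointwise finite-dimensional and $V\cong V_{\mathbf{Q}}$ for some regular grid $\mathbf{Q}=(\varepsilon\mathbb{Z})^n$,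 $\varepsilon>0$. *)

From HB Require Import structures.
From mathcomp Require Import all_boot all_order all_algebra.
From mathcomp Require Import reals.
Set Implicit Arguments. Unset Strict Implicit. Unset Printing Implicit Defensive.
Import Order.TTheory GRing.Theory Num.Theory.
Local Open Scope ring_scope.

Section PersMod.
Variables (k : fieldType) (R : realType) (n : nat).

Definition pt := 'I_n -> R.
Definition ple (s t : pt) : Prop := forall i, s i <= t i.
Definition pll (s t : pt) : Prop := forall i, s i < t i.
Definition shift (s : pt) (e : R) : pt := fun i => s i + e.
Definition flr (e : R) (s : pt) : pt := fun i => (Num.floor (s i / e))%:~R * e.

(* An n-parameter persistence module R^n -> Vect_k. The structure maps
   pm_map s t are only meaningful (and only constrained) when s <= t. *)
Record pmod := PMod {
  pm_obj : pt -> lmodType k;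
  pm_map : forall s t : pt, {linear pm_obj s -> pm_obj t};
  pm_id : forall s x, pm_map s s x = x;
  pm_comp : forall s t u, ple s t -> ple t u ->
    forall x, pm_map t u (pm_map s t x) = pm_map s u x
}.

Definition finite_rank (U W : lmodType k) (f : U -> W) : Prop :=
  exists (m : nat) (b : 'I_m -> W),
    forall x, exists c : 'I_m -> k, f x = \sum_(i < m) c i *: b i.
Definition fin_dim (W : lmodType k) : Prop :=
  exists (m : nat) (b : 'I_m -> W),
    forall x, exists c : 'I_m -> k, x = \sum_(i < m) c i *: b i.

Definition qtame (V : pmod) : Prop :=
  forall s t, pll s t -> finite_rank (pm_map V s t).

Definition pfd (V : pmod) : Prop := forall s, fin_dim (pm_obj V s).

(* V_s -> lim_{e>0} V_{s+e} is an isomorphism: every compatible family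
   (y_e)_{e>0} is the image of exactly one x in V_s *)
Definition usc (V : pmod) : Prop :=
  forall s (y : forall e : R, pm_obj V (shift s e)),
    (forall e e', 0 < e -> e <= e' ->
       pm_map V (shift s e) (shift s e') (y e) = y e') ->
    exists x, (forall e, 0 < e -> pm_map V s (shift s e) x = y e) /\
      forall x', (forall e, 0 < e -> pm_map V s (shift s e) x' = y e) -> x' = x.

Definition interleaving (V W : pmod) (e : R) : Prop :=
  exists (f : forall s, {linear pm_obj V s -> pm_obj W (shift s e)})
         (g : forall s, {linear pm_obj W s -> pm_obj V (shift s e)}),
    (forall s t, ple s t -> forall x,
        f t (pm_map V s t x) = pm_map W (shift s e) (shift t e) (f s x)) /\
    (forall s t, ple s t -> forall x,
        g t (pm_map W s t x) = pm_map V (shift s e) (shift t e) (g s x)) /\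
    (forall s x, g (shift s e) (f s x) = pm_map V s (shift (shift s e) e) x) /\
    (forall s x, f (shift s e) (g s x) = pm_map W s (shift (shift s e) e) x).

(* V is isomorphic to its restriction-extension V_Q along Q = (e Z)^n:
   (V_Q)_s = V_{flr e s}, with structure maps V_{flr e s, flr e t}. *)
Definition iso_grid (V : pmod) (e : R) : Prop :=
  exists f : forall s, {linear pm_obj V s -> pm_obj V (flr e s)},
    (forall s, bijective (f s)) /\
    (forall s t, ple s t -> forall x,
        f t (pm_map V s t x) = pm_map V (flr e s) (flr e t) (f s x)).

Definition rlfp (V : pmod) : Prop :=
  qtame V /\ usc V /\ pfd V /\ exists e, 0 < e /\ iso_grid V e.

End PersMod.

(* Fix eps = delta/2 and let I be the image of the structure map
   V -> V[eps]; it is pointwise finite-dimensional because V is q-tame.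
   Restricting I to the grid (eps Z)^n and extending it back gives W,
   with W_s = I_{floor s}.  W is pointwise finite-dimensional, constant on
   the half-open grid cells (hence upper semicontinuous and isomorphic to
   its own restriction-extension), and V and W are eps-interleaved because
   s <= floor (s + eps) and floor s + eps <= s + eps. *)

From HB Require Import structures.
From mathcomp Require Import all_boot all_order all_algebra reals boolp lra.
Set Implicit Arguments. Unset Strict Implicit. Unset Printing Implicit Defensive.
Import Order.TTheory GRing.Theory Num.Theory.
Local Open Scope ring_scope.

Section ImageModule.
Variables (k : fieldType) (U M : lmodType k) (f : {linear U -> M}).

Definition img_pred : {pred M} := fun y => `[< exists x, f x = y >].

Fact img_submod_closed : submod_closed img_pred.
Proof.
split; first by apply/asboolP; exists 0; rewrite linear0.
move=> a _ _ /asboolP[x <-] /asboolP[y <-]; apply/asboolP.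
by exists (a *: x + y); rewrite linearP.
Qed.
HB.instance Definition _ := GRing.isSubmodClosed.Build k M img_pred img_submod_closed.

Inductive Img : predArgType := ImgC y of y \in img_pred.
Definition img_val (w : Img) : M := let: ImgC y _ := w in y.
HB.instance Definition _ := [isSub of Img for img_val].
HB.instance Definition _ := [Choice of Img by <:].
HB.instance Definition _ := [SubChoice_isSubZmodule of Img by <:].
HB.instance Definition _ := [SubZmodule_isSubLmodule of Img by <:].

Lemma img_valP (w : Img) : exists x, f x = val w.
Proof. by case: w => y /= /asboolP. Qed.

Lemma mem_img x : f x \in img_pred. Proof. by apply/asboolP; exists x. Qed.

Definition to_img x : Img := ImgC (mem_img x).

Lemma to_img_is_linear : linear to_img.
Proof. by move=> a x y; apply: val_inj; rewrite /= linearP. Qed.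
HB.instance Definition _ := GRing.isLinear.Build k U Img *:%R to_img to_img_is_linear.

End ImageModule.

Section Span.
Variables (k : fieldType) (M : lmodType k).

Definition in_span m (b : 'I_m -> M) (x : M) : Prop :=
  exists c : 'I_m -> k, x = \sum_(i < m) c i *: b i.

Definition subspace (S : M -> Prop) : Prop :=
  S 0 /\ forall a x y, S x -> S y -> S (a *: x + y).

Lemma subspace_in_span m (b : 'I_m -> M) : subspace (in_span b).
Proof.
split; first by exists (fun=> 0); rewrite big1 // => i _; rewrite scale0r.
move=> a _ _ [c ->] [d ->]; exists (fun i => a * c i + d i).
rewrite scaler_sumr -big_split; apply: eq_bigr => i _.
by rewrite scalerDl scalerA.
Qed.

Definition fcons m (x0 : M) (b : 'I_m -> M) : 'I_m.+1 -> M :=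
  fun i => if unlift ord0 i is Some j then b j else x0.

Lemma in_span_behead m (b : 'I_m.+1 -> M) x : in_span b x ->
  exists a, in_span (fun i => b (lift ord0 i)) (x - a *: b ord0).
Proof.
move=> [c ->]; exists (c ord0); exists (fun i => c (lift ord0 i)).
by rewrite big_ord_recl addrC addKr.
Qed.

Lemma in_span_fcons m x0 (b : 'I_m -> M) a x :
  in_span b (x - a *: x0) -> in_span (fcons x0 b) x.
Proof.
move=> [c Ec]; exists (fun i => if unlift ord0 i is Some j then c j else a).
rewrite big_ord_recl /fcons unlift_none.
under eq_bigr => i _ do rewrite liftK.
by rewrite -Ec addrC subrK.
Qed.

Lemma subspace_spanned_within m (S : M -> Prop) (b : 'I_m -> M) :
  subspace S -> (forall x, S x -> in_span b x) ->
  exists m' (b' : 'I_m' -> M),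
    (forall i, S (b' i)) /\ forall x, S x -> in_span b' x.
Proof.
elim: m S b => [|m IH] S b [S0 Slin] Sb; first by exists 0%N, b; split=> // -[].
pose tail i := b (lift ord0 i).
have [||m'' [b'' [Tb'' Tspan]]] := IH (fun x => S x /\ in_span tail x) tail.
- have [span0 span_lin] := subspace_in_span tail.
  split=> [|a x y [Sx sx] [Sy sy]]; split=> //; [exact: Slin|exact: span_lin].
- by move=> x [].
have [S_in_tail|] := pselect (forall x, S x -> in_span tail x).
  exists m'', b''; split=> [i|x Sx]; first by case: (Tb'' i).
  exact/Tspan/(conj Sx)/S_in_tail.
(* An x0 in S outside the span of the tail has a nonzero head coordinate,
   so it can eliminate the head coordinate of every x in S. *)
move=> /existsNP[x0 /not_implyP[Sx0 x0_notin_tail]].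
exists m''.+1, (fcons x0 b''); split=> [i|x Sx].
  by rewrite /fcons; case: unlift => [j|//]; case: (Tb'' j).
have [a0 tail_x0] := in_span_behead (Sb x0 Sx0).
have [a tail_x] := in_span_behead (Sb x Sx).
have a0_neq0 : a0 != 0.
  by apply: contra_notN x0_notin_tail => /eqP a00; rewrite a00 scale0r subr0 in tail_x0.
pose t := a / a0.
have Ex : x - t *: x0 = (- t) *: (x0 - a0 *: b ord0) + (x - a *: b ord0).
  by rewrite scalerBr scalerA mulNr divfK // !scaleNr opprK addrACA subrr addr0 addrC.
apply: (in_span_fcons (a := t)); apply: Tspan; split.
  by rewrite addrC -scaleNr; apply: Slin.
by rewrite Ex; apply: (subspace_in_span tail).2.
Qed.

End Span.

Lemma fin_dim_finite_rank (k : fieldType) (U W : lmodType k) (f : {linear U -> W}) :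
  fin_dim U -> finite_rank f.
Proof.
move=> [m [b span_b]]; exists m, (f \o b) => x; have [c ->] := span_b x.
by exists c; rewrite linear_sum; apply: eq_bigr => i _; rewrite linearZ.
Qed.

Lemma Img_fin_dim (k : fieldType) (U M : lmodType k) (f : {linear U -> M}) :
  finite_rank f -> fin_dim (Img f).
Proof.
move=> [m [b span_b]].
have [||m' [b' [img_b' span_b']]] :=
  @subspace_spanned_within _ _ m (fun y => y \in img_pred f) b.
- by have [img0 img_lin] := img_submod_closed f; split=> // a x y; apply: img_lin.
- by move=> _ /asboolP[x <-]; apply: span_b.
exists m', (fun i => ImgC (img_b' i)) => w; have [c Ec] := span_b' _ (valP w).
by exists c; apply: val_inj; rewrite Ec linear_sum.
Qed.

Section Grid.
Variables (R : realType) (n : nat).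
Implicit Types (s t u : pt R n) (x : R).

Lemma ple_trans s t u : ple s t -> ple t u -> ple s u.
Proof. by move=> st tu i; apply: le_trans (st i) (tu i). Qed.

Lemma ple_shift s e : 0 <= e -> ple s (shift s e).
Proof. by move=> e_ge0 i; rewrite lerDl. Qed.

Lemma ple_shift_mono s e e' : e <= e' -> ple (shift s e) (shift s e').
Proof. by move=> le_ee' i; rewrite lerD2l. Qed.

Lemma ple_shift2 s t e : ple s t -> ple (shift s e) (shift t e).
Proof. by move=> st i; rewrite lerD2r. Qed.

Variables (eps : R) (eps_gt0 : 0 < eps).

Lemma floor_mul_le x : (Num.floor (x / eps))%:~R * eps <= x.
Proof. by rewrite -ler_pdivlMr // floor_le. Qed.

Lemma lt_floor_mulD x : x < (Num.floor (x / eps))%:~R * eps + eps.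
Proof. by have := floorD1_gt (x / eps); rewrite intrD ltr_pdivrMr // mulrDl mul1r. Qed.

Lemma flr_ple s : ple (flr eps s) s. Proof. by move=> i; apply: floor_mul_le. Qed.

Lemma ple_flr s t : ple s t -> ple (flr eps s) (flr eps t).
Proof.
move=> st i; rewrite ler_pM2r // ler_int; apply: le_floor.
by rewrite ler_pM2r ?invr_gt0.
Qed.

Lemma ple_flr_shift s : ple s (flr eps (shift s eps)).
Proof. by move=> i; have := lt_floor_mulD (s i + eps); rewrite /flr /shift; lra. Qed.

Lemma flr_idem s : flr eps (flr eps s) = flr eps s.
Proof. by apply: funext => i; rewrite /flr mulfK ?gt_eqF // intrKfloor. Qed.

Lemma flr_shift_small s : exists2 e, 0 < e & ple (flr eps (shift s e)) (flr eps s).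
Proof.
pose gap i := flr eps s i + eps - s i.
have gap_gt0 i : 0 < gap i by have := lt_floor_mulD (s i); rewrite /gap /flr; lra.
pose e := \big[Order.min/1]_i gap i.
have e_gt0 : 0 < e by apply: lt_bigmin => // i _; apply: gap_gt0.
exists (e / 2) => [|i]; first by lra.
have e_le_gap : e <= gap i by apply: bigmin_le.
rewrite ler_pM2r // ler_int -ltzD1 floor_lt_int ltr_pdivrMr // intrD mulrDl mul1r.
by rewrite /shift; move: e_le_gap; rewrite /gap /flr; lra.
Qed.

End Grid.

#[local] Hint Resolve ple_shift ple_shift2 flr_ple ple_flr ple_flr_shift : ple.
#[local] Hint Resolve ple_trans | 10 : ple.

Lemma pfd_qtame (k : fieldType) (R : realType) (n : nat) (V : pmod k R n) :
  pfd V -> qtame V.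
Proof. by move=> V_pfd s t _; apply: fin_dim_finite_rank. Qed.

Section RestrictGrid.
Variables (k : fieldType) (R : realType) (n : nat) (X : pmod k R n).
Variables (eps : R) (eps_gt0 : 0 < eps).
Implicit Types s t u : pt R n.

Lemma restrict_grid_comp s t u : ple s t -> ple t u -> forall x,
  pm_map X (flr eps t) (flr eps u) (pm_map X (flr eps s) (flr eps t) x)
  = pm_map X (flr eps s) (flr eps u) x.
Proof. by move=> st tu; apply: pm_comp; apply: ple_flr. Qed.

Definition restrict_grid : pmod k R n :=
  @PMod k R n (fun s => pm_obj X (flr eps s))
    (fun s t => pm_map X (flr eps s) (flr eps t))
    (fun s => @pm_id _ _ _ X (flr eps s)) restrict_grid_comp.

Lemma restrict_grid_pfd : pfd X -> pfd restrict_grid.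
Proof. by move=> X_pfd s; apply: X_pfd. Qed.

Lemma restrict_grid_usc : usc restrict_grid.
Proof.
move=> s y y_compat; have [e0 e0_gt0 flr_e0] := flr_shift_small eps_gt0 s.
have flr_s_e e : 0 <= e -> ple (flr eps s) (flr eps (shift s e)).
  by move=> e_ge0; apply: ple_flr; last exact: ple_shift.
exists (pm_map X (flr eps (shift s e0)) (flr eps s) (y e0)); split=> [e e_gt0|x' x'_y].
  rewrite /= pm_comp //; last exact/flr_s_e/ltW.
  have [e_le_e0|e0_lt_e] := lerP e e0; last by rewrite -(y_compat e0 e) // ltW.
  have flr_e0_e : ple (flr eps (shift s e0)) (flr eps (shift s e)).
    exact: ple_trans flr_e0 (flr_s_e _ (ltW e_gt0)).
  rewrite -(y_compat e e0) //= pm_comp ?pm_id //.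
  exact/ple_flr/ple_shift_mono.
by rewrite -(x'_y e0) //= pm_comp ?pm_id //; apply/flr_s_e/ltW.
Qed.

Lemma restrict_grid_iso : iso_grid restrict_grid eps.
Proof.
have flr_flr s : ple (flr eps s) (flr eps (flr eps s)) by rewrite flr_idem.
have flr_flr' s : ple (flr eps (flr eps s)) (flr eps s) by rewrite flr_idem.
exists (fun s => pm_map restrict_grid s (flr eps s)); split=> [s|s t st x] /=.
  by exists (pm_map X (flr eps (flr eps s)) (flr eps s)) => x /=;
    rewrite pm_comp ?pm_id.
by rewrite !pm_comp //; do ! apply: ple_flr.
Qed.

End RestrictGrid.

Section ImageOfShift.
Variables (k : fieldType) (R : realType) (n : nat) (V : pmod k R n).
Variables (eps : R) (eps_ge0 : 0 <= eps).
Implicit Types p q r : pt R n.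

Definition im_eta_obj p := Img (pm_map V p (shift p eps)).

Lemma im_eta_map_subproof p q (w : im_eta_obj p) : ple p q ->
  pm_map V (shift p eps) (shift q eps) (val w)
    \in img_pred (pm_map V q (shift q eps)).
Proof.
move=> pq; have [x <-] := img_valP w; apply/asboolP; exists (pm_map V p q x).
by rewrite !pm_comp; eauto with ple.
Qed.

Definition im_eta_map p q (w : im_eta_obj p) : im_eta_obj q :=
  if pselect (ple p q) is left pq then ImgC (im_eta_map_subproof w pq) else 0.

Lemma im_eta_map_is_linear p q : linear (@im_eta_map p q).
Proof.
move=> a x y; rewrite /im_eta_map; case: pselect => pq; last by rewrite scaler0 addr0.
by apply: val_inj; rewrite /= linearP.
Qed.
HB.instance Definition _ p q := GRing.isLinear.Build k (im_eta_obj p) (im_eta_obj q)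
  *:%R (@im_eta_map p q) (@im_eta_map_is_linear p q).

Lemma im_eta_mapE p q w : ple p q ->
  val (@im_eta_map p q w) = pm_map V (shift p eps) (shift q eps) (val w).
Proof. by rewrite /im_eta_map; case: pselect. Qed.

Lemma im_eta_map_id p w : @im_eta_map p p w = w.
Proof. by apply: val_inj; rewrite im_eta_mapE ?pm_id. Qed.

Lemma im_eta_map_comp p q r : ple p q -> ple q r -> forall w,
  @im_eta_map q r (@im_eta_map p q w) = @im_eta_map p r w.
Proof.
move=> pq qr w; apply: val_inj.
by rewrite !im_eta_mapE ?pm_comp //; eauto with ple.
Qed.

Definition im_eta : pmod k R n :=
  @PMod k R n im_eta_obj (fun p q => @im_eta_map p q : {linear _ -> _})
    im_eta_map_id im_eta_map_comp.

Lemma im_eta_pfd : 0 < eps -> qtame V -> pfd im_eta.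
Proof.
move=> eps_gt0 V_qtame p; apply/Img_fin_dim/V_qtame => i.
by rewrite /shift ltrDl.
Qed.

End ImageOfShift.

Section Interleaving.
Variables (k : fieldType) (R : realType) (n : nat) (V : pmod k R n).
Variables (eps : R) (eps_gt0 : 0 < eps).
Implicit Types s t : pt R n.

Let W := restrict_grid (im_eta V (ltW eps_gt0)) eps_gt0.

Definition to_grid s : {linear pm_obj V s -> pm_obj W (shift s eps)} :=
  to_img (pm_map V _ _) \o pm_map V s (flr eps (shift s eps)).

Definition from_grid s : {linear pm_obj W s -> pm_obj V (shift s eps)} :=
  pm_map V (shift (flr eps s) eps) (shift s eps) \o val.

Lemma interleaving_restrict_grid_im_eta : interleaving V W eps.
Proof.
have eps_ge0 := ltW eps_gt0; exists to_grid, from_grid.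
split; [|split; [|split]] => [s t st x|s t st w|s x|s w] /=.
- by apply: val_inj; rewrite im_eta_mapE /= ?pm_comp //; eauto 6 with ple.
- by rewrite im_eta_mapE ?pm_comp //; eauto 6 with ple.
- by rewrite !pm_comp //; eauto 6 with ple.
- by apply: val_inj; rewrite im_eta_mapE /= ?pm_comp //; eauto 6 with ple.
Qed.

End Interleaving.

Theorem lemma4p22 (k : fieldType) (R : realType) (n : nat) (V : pmod k R n) :
  qtame V -> usc V ->
  forall delta : R, 0 < delta ->
  exists W : pmod k R n, rlfp W /\
    exists e : R, 0 <= e /\ e < delta /\ interleaving V W e.
Proof.
move=> V_qtame _ delta delta_gt0.
have eps_gt0 : 0 < delta / 2 by lra.
pose W := restrict_grid (im_eta V (ltW eps_gt0)) eps_gt0.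
have W_pfd : pfd W by apply/restrict_grid_pfd/im_eta_pfd.
exists W; split.
  split; first exact: pfd_qtame.
  split; first exact: restrict_grid_usc.
  by split=> //; exists (delta / 2); split=> //; apply: restrict_grid_iso.
exists (delta / 2); split; first lra.
by split; [lra | apply: interleaving_restrict_grid_im_eta].
Qed.
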